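(* Let $N\ge 1$ be an integer and let $a(1),a(2),\dots$ be a sequence of real numbers such that for all integers $n\ge N$, $$a(2n)\le a(n)+a(n)\quad\text{and}\quad a(2n+1)\le a(n)+a(n+1).$$ For $n\ge 1$ let $q(n):=\max\left\{\frac{a(j)}{j}: n\le j\le 2n\right\}$. Then $q(n)\ge q(n+1)$ for all $n\ge N$. *)

From Stdlib Require Import Reals List.
Open Scope R_scope.

(* The seed value
   a(n)/n is itself an element of the set, so it does not alter the max. *)
Definition q (a : nat -> R) (n : nat) : R :=
  fold_right Rmax (a n / INR n)
    (map (fun j => a j / INR j) (seq n (n + 1))).

(* Writing Q := q a n, every j in [n, 2n] satisfies a j <= Q j.  The window of
   q a (n+1) adds only 2n+1 and 2n+2, and the two subadditivity hypotheses
   give a (2n+1) <= a n + a (n+1) <= Q (2n+1) and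
   a (2n+2) <= 2 a (n+1) <= Q (2n+2). *)
From Stdlib Require Import Reals List Lra Lia.
Open Scope R_scope.

Lemma In_le_fold_Rmax (x0 y : R) (l : list R) :
  In y l -> y <= fold_right Rmax x0 l.
Proof.
  induction l as [|z l IH]; simpl; [tauto|].
  intros [<- | Hy]; [apply Rmax_l|].
  eapply Rle_trans; [exact (IH Hy) | apply Rmax_r].
Qed.

Lemma fold_Rmax_le (x0 M : R) (l : list R) :
  x0 <= M -> (forall y, In y l -> y <= M) -> fold_right Rmax x0 l <= M.
Proof.
  intros H0 Hl; induction l as [|z l IH]; simpl; [exact H0|].
  apply Rmax_lub; [apply Hl; left; reflexivity|].
  apply IH; intros y Hy; apply Hl; right; exact Hy.
Qed.

Lemma Rdiv_le_iff (u d M : R) : 0 < d -> (u / d <= M <-> u <= M * d).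
Proof.
  intros Hd; split; intros H.
  - replace u with (u / d * d) by (field; lra).
    apply Rmult_le_compat_r; lra.
  - apply Rmult_le_reg_r with d; [exact Hd|].
    replace (u / d * d) with u by (field; lra); exact H.
Qed.

Section WindowMax.

Variable a : nat -> R.

Lemma le_q_mul (n j : nat) : (1 <= j)%nat -> (n <= j <= 2 * n)%nat ->
  a j <= q a n * INR j.
Proof.
  intros Hj1 Hj; apply Rdiv_le_iff; [apply lt_0_INR; lia|].
  unfold q; apply In_le_fold_Rmax.
  apply (in_map (fun j => a j / INR j)), in_seq; lia.
Qed.

Lemma q_le (n : nat) (M : R) : (1 <= n)%nat ->
  (forall j, (n <= j <= 2 * n)%nat -> a j <= M * INR j) -> q a n <= M.
Proof.
  intros Hn HM.
  assert (Hdiv : forall j, (n <= j <= 2 * n)%nat -> a j / INR j <= M)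
    by (intros j Hj; apply Rdiv_le_iff; [apply lt_0_INR; lia | apply HM; exact Hj]).
  unfold q; apply fold_Rmax_le; [apply Hdiv; lia|].
  intros y Hy; apply in_map_iff in Hy as [j [<- Hj]]; apply in_seq in Hj.
  apply Hdiv; lia.
Qed.

Lemma le_q_mul_odd (n : nat) : (1 <= n)%nat ->
  a (2 * n + 1)%nat <= a n + a (n + 1)%nat ->
  a (2 * n + 1)%nat <= q a n * INR (2 * n + 1).
Proof.
  intros Hn Hodd.
  pose proof (le_q_mul n n ltac:(lia) ltac:(lia)) as Hn0.
  pose proof (le_q_mul n (n + 1) ltac:(lia) ltac:(lia)) as Hn1.
  rewrite plus_INR, mult_INR in *; simpl INR in *; lra.
Qed.

Lemma le_q_mul_even (n : nat) : (1 <= n)%nat ->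
  a (2 * (n + 1))%nat <= a (n + 1)%nat + a (n + 1)%nat ->
  a (2 * (n + 1))%nat <= q a n * INR (2 * (n + 1)).
Proof.
  intros Hn Heven.
  pose proof (le_q_mul n (n + 1) ltac:(lia) ltac:(lia)) as Hn1.
  rewrite ?mult_INR, ?plus_INR in *; simpl INR in *; lra.
Qed.

End WindowMax.

Theorem lemma3p3 (a : nat -> R) (N : nat) (HN : (1 <= N)%nat)
  (Heven : forall n : nat, (N <= n)%nat -> a (2 * n)%nat <= a n + a n)
  (Hodd : forall n : nat, (N <= n)%nat -> a (2 * n + 1)%nat <= a n + a (n + 1)%nat) :
  forall n : nat, (N <= n)%nat -> q a n >= q a (n + 1)%nat.
Proof.
  intros n Hn; apply Rle_ge, q_le; [lia|]; intros j Hj.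
  destruct (Nat.le_gt_cases j (2 * n)) as [Hle | Hgt].
  - apply le_q_mul; lia.
  - destruct (Nat.eq_dec j (2 * n + 1)) as [-> | Hne].
    + apply le_q_mul_odd; [lia | exact (Hodd n Hn)].
    + replace j with (2 * (n + 1))%nat by lia.
      apply le_q_mul_even; [lia | apply Heven; lia].
Qed.
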